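(* Let $A$ and $I$ be finite sets. In the group $\langle\mathcal P(I)\rangle^{\otimes A}$ one has $$\sum_{J\in\mathcal P(I)}(-1)^{|I|-|J|}\bigotimes_{a\in A}\langle J\rangle=\sum_{k\in\mathcal R(A,I)}\ \bigotimes_{a\in A}\ \sum_{J\in\mathcal P(k(a))}(-1)^{|k(a)|-|J|}\langle J\rangle.$$
   Context: $\mathcal P(I)$ is the set of all subsets of $I$; $\langle\mathcal P(I)\rangle$ is the free abelian group with basis $\{\langle J\rangle: J\in\mathcal P(I)\}$, and $\langle\mathcal P(I)\rangle^{\otimes A}$ is the tensor product over $\mathbb Z$ of copies of it indexed by $A$. $\mathcal R(A,I)$ is the set of functions $k\colon A\to\mathcal P(I)$ with $\bigcup_{a\in A}k(a)=I$. *)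

From HB Require Import structures.
From mathcomp Require Import all_boot all_order all_algebra.
Set Implicit Arguments. Unset Strict Implicit. Unset Printing Implicit Defensive.
Import GRing.Theory Num.Theory.
Local Open Scope ring_scope.

(* <P(I)> : free abelian group with basis {<J> : J subset of I}.
   Since P(I) is finite, it is the group of all functions {set I} -> int. *)
Notation FreeP I := {ffun {set I} -> int}.

Definition gen (I : finType) (J : {set I}) : FreeP I :=
  [ffun K => ((K == J) : nat)%:Z].

(* <P(I)>^{(x) A}: tensor product over Z of free abelian groups, modelled as the
   free abelian group on the product basis P(I)^A, i.e. functions
   {ffun A -> {set I}} -> int. *)
Notation TensP A I := {ffun {ffun A -> {set I}} -> int}.

Definition tens (A I : finType) (x : A -> FreeP I) : TensP A I :=
  [ffun k : {ffun A -> {set I}} => \prod_(a : A) x a (k a)].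

(* R(A,I): functions k : A -> P(I) with union_a k(a) = I *)
Definition covering (A I : finType) (k : {ffun A -> {set I}}) : bool :=
  \bigcup_(a : A) k a == [set: I].

(* Compare coefficients at a basis tensor k0. The coefficient of the right-hand side is
   the sum over coverings k of \prod_a moebius (k0 a) (k a), with moebius the Möbius
   function of the Boolean lattice. Möbius inversion writes the covering condition as
   \sum_(S ⊇ ⋃_a k a) (-1)^(|I| - |S|); exchanging the sums, the sum over k then factors
   into \prod_a \sum_(K ⊆ S) moebius (k0 a) K = \prod_a [k0 a = S], which is the
   coefficient of the left-hand side. *)
From HB Require Import structures.
From mathcomp Require Import all_boot all_order all_algebra.

Set Implicit Arguments.
Unset Strict Implicit.
Unset Printing Implicit Defensive.

Import GRing.Theory.
Local Open Scope ring_scope.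

Section BooleanLatticeMoebius.

Variables (R : comPzRingType) (I : finType).
Implicit Types L K S T : {set I}.

(* bigA_distr expands \prod_i (F i + G i) as a sum over all J; F and G are chosen so
   that the term of J is (-1)^|J :\: L| if L \subset J \subset T and 0 otherwise, while
   the product itself is 1 if L = T and 0 otherwise. *)
Lemma sum_sign_interval L T :
  \sum_(K : {set I} | (L \subset K) && (K \subset T)) (-1) ^+ #|K :\: L|
  = (L == T)%:R :> R.
Proof.
pose F i : R := if i \in T then (if i \in L then 1 else -1) else 0.
pose G i : R := if i \in L then 0 else 1.
have := @bigA_distr R 0 1 *%R +%R I F G.
have -> : \prod_i (F i + G i) = (L == T)%:R.
  have [eLT|neLT] := eqVneq L T.
    by subst T; apply: big1 => i _; rewrite /F /G; case: (i \in L); rewrite ?addr0 ?add0r.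
  have [x TLx] : exists x, (x \in T) != (x \in L).
    apply/existsP; apply: contraNT neLT => /existsPn TL.
    by apply/eqP/setP => x; move/negPn/eqP: (TL x).
  rewrite (bigD1 x) //= /F /G.
  by move: TLx; case: (x \in T); case: (x \in L) => // _; rewrite ?addNr ?addr0 mul0r.
move=> ->; rewrite big_mkcond /=; apply: eq_bigr => K _.
have [/andP[LK KT]|] := ifP.
  rewrite -prodr_const big_mkcond /=; apply: eq_bigr => i _; rewrite /F /G inE.
  have [Ki|nKi] := boolP (i \in K); first by rewrite (subsetP KT) //; case: (i \in L).
  by rewrite (negbTE (contraNN (subsetP LK i) nKi)).
by case/nandP => /subsetPn[x xS nxS]; rewrite (bigD1 x) //= /F /G xS (negbTE nxS) mul0r.
Qed.

Lemma sum_sign_supset L :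
  \sum_(S : {set I} | L \subset S) (-1) ^+ (#|[set: I]| - #|S|) = (L == setT)%:R :> R.
Proof.
have -> : (L == setT) = (set0 == ~: L) by rewrite -setCT (inj_eq (@setC_inj _)) eq_sym.
rewrite -sum_sign_interval (reindex_inj (@setC_inj _)) /=.
apply: eq_big => [S | S _]; first by rewrite sub0set subsetC.
by rewrite setD0 cardsT -cardsCs.
Qed.

Definition moebius L K : R := if L \subset K then (-1) ^+ (#|K| - #|L|) else 0.

Lemma sum_moebius L S : \sum_(K : {set I} | K \subset S) moebius L K = (L == S)%:R.
Proof.
rewrite -big_mkcondr -(sum_sign_interval L S).
by apply: eq_big => [K | K /andP[_ LK]]; [rewrite andbC | rewrite cardsDS].
Qed.

Lemma sum_covering_prod (A : finType) (F : A -> {set I} -> R) :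
  \sum_(k : {ffun A -> {set I}} | covering k) \prod_a F a (k a)
  = \sum_(S : {set I}) (-1) ^+ (#|[set: I]| - #|S|)
      * \prod_a \sum_(K : {set I} | K \subset S) F a K.
Proof.
rewrite big_mkcond /=.
under eq_bigr => k _ do rewrite -mulrb -mulr_natl /covering -sum_sign_supset big_distrl /=.
rewrite (exchange_big_dep xpredT) //=; apply: eq_bigr => S _.
rewrite -big_distrr /=; congr (_ * _).
rewrite bigA_distr_big_dep; apply: eq_bigl => k.
by apply/bigcupsP/familyP => [kS a | kS a _]; exact: kS.
Qed.

End BooleanLatticeMoebius.

Lemma genE (I : finType) (J L : {set I}) : gen J L = (L == J)%:R.
Proof. by rewrite ffunE natz. Qed.

Lemma sum_gen_sign (I : finType) (K : {set I}) :
  \sum_(J : {set I} | J \subset K) (gen J *~ (-1) ^+ (#|K| - #|J|)%N)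
  = [ffun L => moebius int L K].
Proof.
apply/ffunP => L; rewrite sum_ffunE ffunE /moebius.
under eq_bigr do rewrite ffunMzE genE mulrzz mulr_natl mulrb.
rewrite -big_mkcondr; case: ifP => LK.
  by rewrite (big_pred1 L) // => J; rewrite eq_sym andb_idl // => /eqP->.
by rewrite big_pred0 // => J; apply/andP => -[JK /eqP eLJ]; rewrite eLJ JK in LK.
Qed.

Theorem lemma15p1 (A I : finType) :
  \sum_(J : {set I}) (tens (fun _ : A => gen J) *~ (-1) ^+ (#|[set: I]| - #|J|)%N)
  = \sum_(k : {ffun A -> {set I}} | covering k)
      tens (fun a : A =>
        \sum_(J : {set I} | J \subset k a) (gen J *~ (-1) ^+ (#|k a| - #|J|)%N)).
Proof.
apply/ffunP => k0; rewrite !sum_ffunE.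
under [RHS]eq_bigr do [rewrite ffunE; under eq_bigr do rewrite sum_gen_sign ffunE].
rewrite (sum_covering_prod (fun a => moebius int (k0 a))); apply: eq_bigr => S _.
rewrite ffunMzE ffunE mulrzz mulrC; congr (_ * _).
by apply: eq_bigr => a _; rewrite sum_moebius genE.
Qed.
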